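(* Let $\lambda\geqslant\omega$ be a cardinal and $n$ a positive integer, and let $\mathscr{I}_\lambda^n$ carry any Hausdorff topology making it a topological semigroup. Then every continuous homomorphism from $\mathscr{I}_\lambda^n$ into a compact (Hausdorff) topological semigroup is annihilating (constant).
   Context: A topological semigroup is a Hausdorff space with a continuous associative multiplication. For a set $X$ of cardinality $\lambda$, $\mathscr{I}(X)$ is the semigroup of all partial one-to-one maps of $X$ (including the empty map) under composition; the rank of $\alpha$ is $|\operatorname{ran}\alpha|$, and $\mathscr{I}_\lambda^n=\{\alpha\in\mathscr{I}(X):\operatorname{rank}\alpha\leqslant n\}$. A homomorphism is annihilating if it is constant. *)

From Stdlib Require Import List Arith.
Import ListNotations.
Set Implicit Arguments.

Record topology (T : Type) := Topology {
  is_open : (T -> Prop) -> Prop;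
  open_full : is_open (fun _ => True);
  open_inter : forall U V, is_open U -> is_open V ->
                 is_open (fun x => U x /\ V x);
  open_union : forall F : (T -> Prop) -> Prop,
                 (forall U, F U -> is_open U) ->
                 is_open (fun x => exists U, F U /\ U x)
}.

Definition hausdorff (T : Type) (tau : topology T) : Prop :=
  forall x y : T, x <> y ->
    exists U V, is_open tau U /\ is_open tau V /\ U x /\ V y /\
                (forall z, U z -> V z -> False).

Definition compact (T : Type) (tau : topology T) : Prop :=
  forall F : (T -> Prop) -> Prop,
    (forall U, F U -> is_open tau U) ->
    (forall x, exists U, F U /\ U x) ->
    exists l : list (T -> Prop),
      (forall U, In U l -> F U) /\ (forall x, exists U, In U l /\ U x).

Definition continuous (T1 T2 : Type) (t1 : topology T1) (t2 : topology T2)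
  (f : T1 -> T2) : Prop :=
  forall W, is_open t2 W -> is_open t1 (fun x => W (f x)).

Definition prod_open (T1 T2 : Type) (t1 : topology T1) (t2 : topology T2)
  (W : T1 * T2 -> Prop) : Prop :=
  forall p, W p -> exists U V, is_open t1 U /\ is_open t2 V /\
    U (fst p) /\ V (snd p) /\ (forall q, U (fst q) -> V (snd q) -> W q).

Definition continuous2 (T1 T2 T3 : Type) (t1 : topology T1) (t2 : topology T2)
  (t3 : topology T3) (f : T1 -> T2 -> T3) : Prop :=
  forall W, is_open t3 W -> prod_open t1 t2 (fun p => W (f (fst p) (snd p))).

Definition topological_semigroup (S : Type) (mul : S -> S -> S)
  (tau : topology S) : Prop :=
  hausdorff tau /\
  (forall a b c, mul a (mul b c) = mul (mul a b) c) /\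
  continuous2 tau tau tau mul.

(* partial maps of X, as X -> option X (None = undefined) *)
Definition pinj (X : Type) (a : X -> option X) : Prop :=
  forall x y z, a x = Some z -> a y = Some z -> x = y.

Definition rank_le (X : Type) (n : nat) (a : X -> option X) : Prop :=
  exists l : list X, length l <= n /\ forall x y, a x = Some y -> In y l.

(* composition, acting on the right: x (a b) = (x a) b *)
Definition pcomp (X : Type) (a b : X -> option X) : X -> option X :=
  fun x => match a x with Some y => b y | None => None end.

Definition Iln (X : Type) (n : nat) : Type :=
  { a : X -> option X | pinj a /\ rank_le n a }.

Lemma pcomp_closed (X : Type) (n : nat) (a b : X -> option X) :
  pinj a /\ rank_le n a -> pinj b /\ rank_le n b ->
  pinj (pcomp a b) /\ rank_le n (pcomp a b).
Proof.
  intros [Ia _] [Ib [l [Hl Hr]]]. unfold pcomp. split.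
  - intros x y z Hx Hy.
    destruct (a x) as [u|] eqn:Ex; [|discriminate].
    destruct (a y) as [v|] eqn:Ey; [|discriminate].
    assert (u = v) by (apply (Ib u v z); assumption). subst v.
    apply (Ia x y u); assumption.
  - exists l. split; [exact Hl|].
    intros x y H. destruct (a x) as [u|]; [|discriminate]. exact (Hr u y H).
Qed.

Definition Iln_mul (X : Type) (n : nat) (a b : Iln X n) : Iln X n :=
  exist _ (pcomp (proj1_sig a) (proj1_sig b))
        (pcomp_closed (proj2_sig a) (proj2_sig b)).

(* X has cardinality lambda >= omega, i.e. X is infinite *)
Definition infinite_type (X : Type) : Prop :=
  exists f : nat -> X, forall i j, f i = f j -> i = j.

(* Given a of rank at most n, spread its (at most n) values over
   infinitely many pairwise disjoint copies inside X: this gives elements u_j, w_k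
   of I_lambda^n with u_j w_j = a and u_j w_k = 0 (the empty map) for j <> k.
   In the compact semigroup S the pairs (h u_j, h w_j) have a cluster point (s, t),
   and continuity of multiplication makes s t a limit both of the diagonal products
   h u_j h w_j = h a and of the off-diagonal products h u_j h w_k = h 0.  Hausdorffness
   gives h a = h 0.  Neither the topology on I_lambda^n nor n >= 1 plays a role. *)
From Stdlib Require Import List Lia Cantor Classical ClassicalEpsilon
  FunctionalExtensionality ProofIrrelevance.
Import ListNotations.

(* F plays the role of "frequently": an upward closed family of index sets, prime
   for finite unions and not containing the empty set (e.g. the infinite subsets
   of nat). *)
Section ClusterPoint.

Variables (S : Type) (sigma : topology S) (I : Type) (F : (I -> Prop) -> Prop).
Hypothesis F_mono : forall R R' : I -> Prop, (forall j, R j -> R' j) -> F R -> F R'.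
Hypothesis F_or : forall R R' : I -> Prop, F (fun j => R j \/ R' j) -> F R \/ F R'.
Hypothesis F_false : ~ F (fun _ => False).

Lemma F_exists_in (l : list (S -> Prop)) (p : I -> S) :
  F (fun j => exists A, In A l /\ A (p j)) -> exists A, In A l /\ F (fun j => A (p j)).
Proof.
  induction l as [|B l IH]; intros H.
  - exfalso. apply F_false. revert H. apply F_mono. now intros j [A [[] _]].
  - destruct (F_or (fun j => B (p j)) (fun j => exists A, In A l /\ A (p j)))
      as [HB|Hl].
    + revert H. apply F_mono. intros j [A [[<-|HA] HAj]]; [now left|right; now exists A].
    + exists B. split; [now left|exact HB].
    + destruct (IH Hl) as [A [HA HAF]]. exists A. split; [now right|exact HAF].
Qed.

Lemma compact_cluster (p : I -> S) :
  compact sigma -> F (fun _ => True) ->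
  exists s, forall A, is_open sigma A -> A s -> F (fun j => A (p j)).
Proof.
  intros Hc HT. apply NNPP; intros Hno.
  assert (Hnbhd : forall s, exists A, is_open sigma A /\ A s /\ ~ F (fun j => A (p j))).
  { intros s. apply NNPP; intros Hs. apply Hno. exists s. intros A oA As.
    apply NNPP; intros HA. apply Hs. now exists A. }
  destruct (Hc (fun A => is_open sigma A /\ ~ F (fun j => A (p j)))) as [l [Hl Hcov]].
  - now intros U [oU _].
  - intros s. destruct (Hnbhd s) as [A [oA [As HA]]]. now exists A.
  - destruct (F_exists_in l p) as [A [HA HAF]].
    + revert HT. apply F_mono. intros j _. apply Hcov.
    + exact (proj2 (Hl A HA) HAF).
Qed.

End ClusterPoint.

Definition infinitely (R : nat -> Prop) : Prop := forall N, exists j, N <= j /\ R j.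

Lemma infinitely_mono (R R' : nat -> Prop) :
  (forall j, R j -> R' j) -> infinitely R -> infinitely R'.
Proof.
  intros HR H N. destruct (H N) as [j [Hj Rj]]. exists j. auto.
Qed.

Lemma infinitely_or (R R' : nat -> Prop) :
  infinitely (fun j => R j \/ R' j) -> infinitely R \/ infinitely R'.
Proof.
  intros H. apply NNPP; intros Hno. apply not_or_and in Hno as [HR HR'].
  apply not_all_ex_not in HR as [N HN]. apply not_all_ex_not in HR' as [N' HN'].
  destruct (H (Nat.max N N')) as [j [Hj [Rj|Rj]]].
  - apply HN. exists j. split; [lia|exact Rj].
  - apply HN'. exists j. split; [lia|exact Rj].
Qed.

Lemma infinitely_false : ~ infinitely (fun _ => False).
Proof.
  intros H. now destruct (H 0) as [j [_ []]].
Qed.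

Lemma compact_cluster_pair (S : Type) (sigma : topology S) (p q : nat -> S) :
  compact sigma ->
  exists s t, forall A B, is_open sigma A -> is_open sigma B -> A s -> B t ->
    infinitely (fun j => A (p j) /\ B (q j)).
Proof.
  intros Hc.
  destruct (compact_cluster _ sigma _ infinitely infinitely_mono infinitely_or
              infinitely_false p Hc) as [s Hs].
  { intros N. now exists N. }
  (* Frequency conditioned on p j being near s; it is again prime because the
     neighbourhoods of s are closed under finite intersections. *)
  pose (Fs := fun R : nat -> Prop =>
    forall A, is_open sigma A -> A s -> infinitely (fun j => A (p j) /\ R j)).
  destruct (compact_cluster _ sigma _ Fs) with (p := q) as [t Ht]; unfold Fs in *.
  - intros R R' HR H A oA As.
    apply (infinitely_mono _ _ (fun j '(conj Aj Rj) => conj Aj (HR j Rj)) (H A oA As)).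
  - intros R R' H. apply NNPP; intros Hno. apply not_or_and in Hno as [HR HR'].
    apply not_all_ex_not in HR as [A HA]. apply not_all_ex_not in HR' as [A' HA'].
    apply imply_to_and in HA as [oA HA]. apply imply_to_and in HA as [As HA].
    apply imply_to_and in HA' as [oA' HA']. apply imply_to_and in HA' as [As' HA'].
    destruct (infinitely_or (fun j => A (p j) /\ R j) (fun j => A' (p j) /\ R' j))
      as [HR|HR']; [|contradiction|contradiction].
    refine (infinitely_mono _ _ _ (H _ (open_inter _ _ _ oA oA') (conj As As'))).
    intros j [[Aj A'j] [Rj|Rj]]; [left|right]; now split.
  - intros H. apply infinitely_false.
    refine (infinitely_mono _ _ _ (H _ (open_full sigma) I)). now intros j [_ []].
  - exact Hc.
  - intros A oA As. exact (infinitely_mono _ _ (fun j Aj => conj Aj I) (Hs A oA As)).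
  - exists s, t. intros A B oA oB As Bt. exact (Ht B oB Bt A oA As).
Qed.

Lemma hausdorff_eq (S : Type) (sigma : topology S) (x y : S) :
  hausdorff sigma -> (forall U, is_open sigma U -> U x -> U y) -> x = y.
Proof.
  intros Hh Hxy. apply NNPP; intros Hne.
  destruct (Hh x y Hne) as [U [V [oU [oV [Ux [Vy Hdis]]]]]].
  exact (Hdis y (Hxy U oU Ux) Vy).
Qed.

Lemma compact_diag_eq_offdiag (S : Type) (mulS : S -> S -> S) (sigma : topology S)
  (p q : nat -> S) (c d : S) :
  hausdorff sigma -> compact sigma -> continuous2 sigma sigma sigma mulS ->
  (forall j, mulS (p j) (q j) = c) ->
  (forall j k, j <> k -> mulS (p j) (q k) = d) -> c = d.
Proof.
  intros Hh Hc Hm Hdiag Hoff.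
  destruct (compact_cluster_pair _ sigma p q Hc) as [s [t Hst]].
  assert (Hnear : forall U, is_open sigma U -> U (mulS s t) ->
    forall N, exists j k, N <= j /\ j < k /\ U (mulS (p j) (q j)) /\ U (mulS (p j) (q k))).
  { intros U oU Ust N.
    destruct (Hm U oU (s, t) Ust) as [A [B [oA [oB [As [Bt HAB]]]]]].
    destruct (Hst A B oA oB As Bt N) as [j [Hj [Aj Bj]]].
    destruct (Hst A B oA oB As Bt (j + 1)) as [k [Hk [_ Bk]]].
    exists j, k. repeat split; [lia|lia|exact (HAB (_, _) Aj Bj)|exact (HAB (_, _) Aj Bk)]. }
  transitivity (mulS s t); [symmetry|]; apply (hausdorff_eq _ sigma _ _ Hh); intros U oU Ust;
    destruct (Hnear U oU Ust 0) as [j [k [_ [Hjk [Ujj Ujk]]]]].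
  - now rewrite <- (Hdiag j).
  - rewrite <- (Hoff j k); [exact Ujk|lia].
Qed.

Lemma list_injection (X : Type) (l : list X) :
  exists e : X -> nat, forall y y', In y l -> In y' l -> e y = e y' -> y = y'.
Proof.
  induction l as [|z l [e He]].
  - exists (fun _ => 0). intros y y' [].
  - exists (fun y => if excluded_middle_informative (y = z) then 0 else S (e y)).
    intros y y' Hy Hy'.
    destruct (excluded_middle_informative (y = z)) as [->|Hyz],
             (excluded_middle_informative (y' = z)) as [->|Hy'z];
      try easy; try discriminate.
    intros [= E]. apply He; auto.
    + destruct Hy; congruence.
    + destruct Hy'; congruence.
Qed.

Lemma infinite_disjoint_copies (X : Type) (l : list X) :
  infinite_type X ->
  exists g : nat -> X -> X, forall j k y y', In y l -> In y' l ->
    g j y = g k y' -> j = k /\ y = y'.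
Proof.
  intros [f Hf]. destruct (list_injection _ l) as [e He].
  exists (fun j y => f (to_nat (j, e y))). intros j k y y' Hy Hy' E.
  apply Hf, to_nat_inj in E. injection E as -> Ee. split; [reflexivity|auto].
Qed.

Definition inv_on {X : Type} (g : X -> X) (l : list X) : X -> option X :=
  fun z => find (fun y => if excluded_middle_informative (g y = z) then true else false) l.

Lemma inv_on_Some (X : Type) (g : X -> X) (l : list X) (z y : X) :
  inv_on g l z = Some y -> In y l /\ g y = z.
Proof.
  unfold inv_on. intros H. apply find_some in H as [Hy H].
  destruct (excluded_middle_informative (g y = z)); easy.
Qed.

Lemma inv_on_image (X : Type) (g : X -> X) (l : list X) (y : X) :
  (forall y', In y' l -> g y' = g y -> y' = y) -> In y l -> inv_on g l (g y) = Some y.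
Proof.
  intros Hg Hy. destruct (inv_on g l (g y)) as [y'|] eqn:E.
  - apply inv_on_Some in E as [Hy' E]. now rewrite (Hg y' Hy' E).
  - exfalso. unfold inv_on in E. apply (find_none _ _ E) in Hy.
    now destruct (excluded_middle_informative (g y = g y)).
Qed.

Lemma Iln_ext (X : Type) (n : nat) (a b : Iln X n) : proj1_sig a = proj1_sig b -> a = b.
Proof.
  destruct a as [a Ha], b as [b Hb]; simpl; intros <-. f_equal. apply proof_irrelevance.
Qed.

Lemma Iln_zero_spec (X : Type) (n : nat) :
  pinj (fun _ : X => @None X) /\ rank_le n (fun _ : X => @None X).
Proof.
  split; [easy|]. exists []. split; [simpl; lia|easy].
Qed.

Definition Iln_zero (X : Type) (n : nat) : Iln X n :=
  exist (fun b => pinj b /\ rank_le n b) _ (Iln_zero_spec X n).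

Section Splitting.

Context {X : Type} {n : nat} {a : X -> option X} {l : list X} {g : nat -> X -> X}.
Hypothesis a_pinj : pinj a.
Hypothesis l_length : length l <= n.
Hypothesis a_range : forall x y, a x = Some y -> In y l.
Hypothesis g_disjoint : forall j k y y', In y l -> In y' l -> g j y = g k y' -> j = k /\ y = y'.

Definition split_left (j : nat) : X -> option X := fun x => option_map (g j) (a x).

Definition split_right (k : nat) : X -> option X := inv_on (g k) l.

Lemma split_left_spec (j : nat) : pinj (split_left j) /\ rank_le n (split_left j).
Proof.
  unfold split_left. split.
  - intros x x' z. destruct (a x) as [y|] eqn:Ex, (a x') as [y'|] eqn:Ex'; try discriminate.
    intros [= E] [= <-]. destruct (g_disjoint j j y y') as [_ <-]; eauto.
  - exists (map (g j) l). rewrite length_map. split; [exact l_length|].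
    intros x z. destruct (a x) as [y|] eqn:Ex; [|discriminate].
    intros [= <-]. apply in_map. eauto.
Qed.

Lemma split_right_spec (k : nat) : pinj (split_right k) /\ rank_le n (split_right k).
Proof.
  unfold split_right. split.
  - intros z z' y E E'. apply inv_on_Some in E as [_ <-], E' as [_ <-]. reflexivity.
  - exists l. split; [exact l_length|]. intros z y E. now apply inv_on_Some in E.
Qed.

Lemma split_diag (j : nat) : pcomp (split_left j) (split_right j) = a.
Proof.
  apply functional_extensionality. intros x. unfold pcomp, split_left, split_right.
  destruct (a x) as [y|] eqn:Ex; [|reflexivity]. simpl.
  apply inv_on_image; [|eauto]. intros y' Hy' E. exact (proj2 (g_disjoint j j y' y Hy' (a_range x y Ex) E)).
Qed.

Lemma split_offdiag (j k : nat) :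
  j <> k -> pcomp (split_left j) (split_right k) = fun _ => None.
Proof.
  intros Hjk. apply functional_extensionality. intros x. unfold pcomp, split_left, split_right.
  destruct (a x) as [y|] eqn:Ex; [|reflexivity]. simpl.
  destruct (inv_on (g k) l (g j y)) as [y'|] eqn:E; [|reflexivity].
  apply inv_on_Some in E as [Hy' E].
  destruct (g_disjoint k j y' y) as [-> _]; eauto. contradiction.
Qed.

End Splitting.

Lemma Iln_split (X : Type) (n : nat) (a : Iln X n) :
  infinite_type X ->
  exists u w : nat -> Iln X n,
    (forall j, Iln_mul (u j) (w j) = a) /\
    (forall j k, j <> k -> Iln_mul (u j) (w k) = Iln_zero X n).
Proof.
  intros HX. destruct a as [a [a_pinj [l [l_length a_range]]]].
  destruct (infinite_disjoint_copies _ l HX) as [g Hg].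
  exists (fun j => exist (fun b => pinj b /\ rank_le n b) _
                    (split_left_spec a_pinj l_length a_range Hg j)),
         (fun k => exist (fun b => pinj b /\ rank_le n b) _
                    (split_right_spec (g := g) l_length k)).
  split.
  - intros j. apply Iln_ext. exact (split_diag a_range Hg j).
  - intros j k Hjk. apply Iln_ext. exact (split_offdiag a_range Hg j k Hjk).
Qed.

Theorem theorem9 (X : Type) (HX : infinite_type X) (n : nat) (Hn : 1 <= n)
  (tau : topology (Iln X n))
  (Htau : topological_semigroup (@Iln_mul X n) tau)
  (S : Type) (mulS : S -> S -> S) (sigma : topology S)
  (HS : topological_semigroup mulS sigma) (HSc : compact sigma)
  (h : Iln X n -> S)
  (Hhom : forall a b, h (Iln_mul a b) = mulS (h a) (h b))
  (Hcont : continuous tau sigma h) :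
  forall a b : Iln X n, h a = h b.
Proof.
  destruct HS as [HSh [_ HSm]].
  assert (Hzero : forall a, h a = h (Iln_zero X n)).
  { intros a. destruct (Iln_split _ _ a HX) as [u [w [Hdiag Hoff]]].
    apply (compact_diag_eq_offdiag S mulS sigma (fun j => h (u j)) (fun j => h (w j))
             _ _ HSh HSc HSm).
    - intros j. now rewrite <- Hhom, Hdiag.
    - intros j k Hjk. now rewrite <- Hhom, Hoff. }
  intros a b. now rewrite (Hzero a), (Hzero b).
Qed.
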